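(* Let $\mathbb{Z}[i]$ be the ring of Gaussian integers. For all $r\ge1$ and all primes $p$, $H^2(\Gamma(SL_2(\mathbb{Z}[i]),p^r);\mathbb{F}_p)$ contains a subspace isomorphic to $\mathbb{F}_p\oplus\mathbb{F}_p$; that is, it has dimension at least $2$ over $\mathbb{F}_p$.
   Context: $\Gamma(SL_2(\mathbb{Z}[i]),p^r)=\ker\big(SL_2(\mathbb{Z}[i])\to SL_2(\mathbb{Z}[i]\otimes_{\mathbb{Z}}\mathbb{Z}/p^r)\big)$; cohomology is group cohomology with trivial coefficients $\mathbb{F}_p$. *)

From HB Require Import structures.
From mathcomp Require Import all_boot all_order all_algebra all_field.
Set Implicit Arguments. Unset Strict Implicit. Unset Printing Implicit Defensive.
Import Order.TTheory GRing.Theory Num.Theory.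
Local Open Scope ring_scope.

Definition gaussInt (z : algC) : bool :=
  ('Re z \is a Num.int) && ('Im z \is a Num.int).

Definition SL2Zi (A : 'M[algC]_2) : bool :=
  [forall i, forall j, gaussInt (A i j)] && (\det A == 1).

(* Principal congruence subgroup Gamma(SL_2(Z[i]), m) : kernel of reduction
   SL_2(Z[i]) -> SL_2(Z[i] / m Z[i]), i.e. A = 1 modulo m Z[i] entrywise. *)
Definition Gamma_cong (m : nat) (A : 'M[algC]_2) : bool :=
  SL2Zi A && [forall i, forall j, gaussInt ((A i j - (1%:M : 'M[algC]_2) i j) / m%:R)].

(* Inhomogeneous 2-cochains of a group G (given as a membership predicate on
   matrices, with matrix multiplication as group law) with values in the
   trivial module F. *)
Definition is_2cocycle (G : pred 'M[algC]_2) (F : zmodType)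
    (f : 'M[algC]_2 -> 'M[algC]_2 -> F) : Prop :=
  forall g h k, G g -> G h -> G k ->
    f h k - f (g *m h) k + f g (h *m k) - f g h = 0.

Definition is_2coboundary (G : pred 'M[algC]_2) (F : zmodType)
    (f : 'M[algC]_2 -> 'M[algC]_2 -> F) : Prop :=
  exists c : 'M[algC]_2 -> F, forall g h, G g -> G h ->
    f g h = c h - c (g *m h) + c g.

(* dim_F H^2(G; F) >= 2 : there are two 2-cocycles whose classes are linearly
   independent in H^2(G;F) = Z^2 / B^2. *)
Definition H2_dim_ge2 (G : pred 'M[algC]_2) (F : fieldType) : Prop :=
  exists f1 f2 : 'M[algC]_2 -> 'M[algC]_2 -> F,
    [/\ is_2cocycle G f1, is_2cocycle G f2 &
      forall a b : F,
        is_2coboundary G (fun g h => a * f1 g h + b * f2 g h) ->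
        a = 0 /\ b = 0].

(* Write m = p^r.  For i <> j, g |-> Re (g_ij / m) and g |-> Im (g_ij / m),
   reduced mod p, are homomorphisms Gamma(m) -> F_p, because off-diagonal
   entries satisfy (gh)_ij = g_ij + h_ij mod m^2.  Cup products of
   homomorphisms are 2-cocycles, whereas a 2-coboundary is symmetric on
   commuting pairs.  On the commuting transvections with entry m and m*i at
   position (0,1), the cup product of the two (0,1)-homomorphisms takes the
   values 1 and 0 on the two orders, and the (1,0) one vanishes; the
   transposed transvections play the symmetric role.  So no nontrivial
   combination of the two classes is a coboundary. *)

From HB Require Import structures.
From mathcomp Require Import all_boot all_order all_algebra all_field ring.
Set Implicit Arguments. Unset Strict Implicit. Unset Printing Implicit Defensive.
Import Order.TTheory GRing.Theory Num.Theory.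
Local Open Scope ring_scope.

Lemma Re1 (C : numClosedFieldType) : 'Re (1 : C) = 1.
Proof. by apply/Creal_ReP; rewrite real1. Qed.

Lemma Im1 (C : numClosedFieldType) : 'Im (1 : C) = 0.
Proof. by apply/Creal_ImP; rewrite real1. Qed.

Fact gaussInt_subring_closed : subring_closed gaussInt.
Proof.
split; first by rewrite unfold_in /= Re1 Im1 rpred0 rpred1.
  move=> x y /andP[? ?] /andP[? ?]; rewrite unfold_in /=.
  by rewrite !raddfB /= !rpredB.
move=> x y /andP[? ?] /andP[? ?]; rewrite unfold_in /=.
by rewrite ReM ImM rpredB ?rpredD ?rpredM.
Qed.

HB.instance Definition _ :=
  GRing.isSubringClosed.Build algC gaussInt gaussInt_subring_closed.

Lemma gaussInt_i : 'i \in gaussInt.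
Proof. by rewrite unfold_in /gaussInt Re_i Im_i rpred0 rpred1. Qed.

Definition int_red (R : nzRingType) (x : algC) : R := (Num.floor x)%:~R.

Section IntegerReduction.

Variable R : nzRingType.

Lemma int_redD : {in Num.int &, {morph @int_red R : x y / x + y}}.
Proof. by move=> x y xZ yZ; rewrite /int_red real_floorDzr ?Rreal_int // intrD. Qed.

Lemma int_redM : {in Num.int &, {morph @int_red R : x y / x * y}}.
Proof.
move=> x y xZ yZ.
by rewrite /int_red -{1}(floorK xZ) -{1}(floorK yZ) -intrM intrKfloor intrM.
Qed.

Lemma int_red_nat n : int_red R n%:R = n%:R.
Proof. by rewrite /int_red pmulrn intrKfloor. Qed.

Lemma int_red0 : int_red R 0 = 0.
Proof. exact: (int_red_nat 0). Qed.

Lemma int_red1 : int_red R 1 = 1.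
Proof. exact: (int_red_nat 1). Qed.

End IntegerReduction.

Definition cup (R : pzRingType) (al be : 'M[algC]_2 -> R) (g h : 'M[algC]_2) : R :=
  al g * be h.

Lemma cup_is_2cocycle (G : pred 'M[algC]_2) (R : pzRingType) (al be : 'M_2 -> R) :
  {in G &, {morph al : g h / g *m h >-> g + h}} ->
  {in G &, {morph be : g h / g *m h >-> g + h}} ->
  is_2cocycle G (cup al be).
Proof.
move=> alM beM g h k Gg Gh Gk; rewrite /cup alM // beM // mulrDl mulrDr.
set a := al h * be k; set b := al g * be k; set c := al g * be h.
by rewrite [b + a]addrC opprD addNKr [c + b]addrC addKr subrr.
Qed.

Lemma coboundary_commute (G : pred 'M[algC]_2) (V : zmodType) f u v :
  @is_2coboundary G V f -> G u -> G v -> u *m v = v *m u -> f u v = f v u.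
Proof.
by case=> c fE Gu Gv uv; rewrite !fE // uv [LHS]addrC addrA [RHS]addrAC.
Qed.

Definition transvection (R : pzRingType) n (i j : 'I_n) (z : R) : 'M[R]_n :=
  1%:M + z *: delta_mx i j.

Section Transvections.

Variables (R : comNzRingType) (n : nat) (i j : 'I_n).
Hypothesis neq_ij : i != j.

Lemma transvectionD (z w : R) :
  transvection i j z *m transvection i j w = transvection i j (z + w).
Proof.
rewrite /transvection mulmxDl !mulmxDr !mul1mx mulmx1 -scalemxAl -scalemxAr scalerA.
rewrite mul_delta_mx_cond eq_sym (negbTE neq_ij) mulr0n scaler0 addr0.
by rewrite -addrA -scalerDl [w + z]addrC.
Qed.

Lemma transvectionC (z w : R) :
  transvection i j z *m transvection i j w = transvection i j w *m transvection i j z.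
Proof. by rewrite !transvectionD addrC. Qed.

Lemma trmx_transvection (z : R) : (transvection i j z)^T = transvection j i z.
Proof. by rewrite /transvection linearD linearZ /= trmx1 trmx_delta. Qed.

Lemma transvection_offdiag (z : R) : transvection i j z i j = z.
Proof. by rewrite !mxE (negbTE neq_ij) !eqxx mulr1 add0r. Qed.

Lemma transvection_offdiag_other (z : R) : transvection j i z i j = 0.
Proof. by rewrite !mxE (negbTE neq_ij) mulr0 addr0. Qed.

End Transvections.

Lemma det_transvection (R : comNzRingType) n (i j : 'I_n) (z : R) :
  i != j -> \det (transvection i j z) = 1.
Proof.
wlog lt_ji : i j / (j < i)%N => [hwlog|] neq_ij.
  case: (ltngtP i j) => [lt_ij|lt_ji|/val_inj eq_ij]; last by rewrite eq_ij eqxx in neq_ij.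
  - by rewrite -det_tr trmx_transvection hwlog // eq_sym.
  - exact: hwlog.
rewrite det_trig; last first.
  apply/is_trig_mxP => k l lt_kl; rewrite !mxE -val_eqE (ltn_eqF lt_kl) add0r.
  case: (k =P i) (l =P j) => [eq_ki | _] [eq_lj | _]; rewrite ?mulr0 //.
  by move: lt_ji; rewrite -eq_ki -eq_lj => /(ltn_trans lt_kl); rewrite ltnn.
apply: big1 => k _; rewrite !mxE eqxx.
by case: (k =P i) => [-> | _]; rewrite ?(negbTE neq_ij) mulr0 addr0.
Qed.

Lemma Gamma_cong_offdiag m (g : 'M[algC]_2) (i j : 'I_2) :
  i != j -> Gamma_cong m g -> g i j / m%:R \in gaussInt.
Proof.
move=> neq_ij /andP[_ /forallP /(_ i) /forallP /(_ j)].
by rewrite mxE (negbTE neq_ij) subr0.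
Qed.

Lemma Gamma_cong_offdiagM m (g h : 'M[algC]_2) (i j : 'I_2) :
  (0 < m)%N -> i != j -> Gamma_cong m g -> Gamma_cong m h ->
  exists2 z, z \in gaussInt &
    (g *m h) i j / m%:R = g i j / m%:R + h i j / m%:R + m%:R * z.
Proof.
move=> m_gt0 neq_ij /andP[_ /forallP gZ] /andP[_ /forallP hZ].
set mC : algC := m%:R; have mC0 : mC != 0 by rewrite pnatr_eq0 -lt0n.
pose G := \matrix_(k, l) ((g k l - 1%:M k l) / mC).
pose H := \matrix_(k, l) ((h k l - 1%:M k l) / mC).
have gE : g = 1%:M + mC *: G.
  by apply/matrixP=> k l; rewrite !mxE mulrC divfK // addrC subrK.
have hE : h = 1%:M + mC *: H.
  by apply/matrixP=> k l; rewrite !mxE mulrC divfK // addrC subrK.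
have GZ k l : G k l \in gaussInt by rewrite mxE; move/forallP: (gZ k); apply.
have HZ k l : H k l \in gaussInt by rewrite mxE; move/forallP: (hZ k); apply.
exists ((G *m H) i j); first by rewrite mxE rpred_sum // => k _; rewrite rpredM.
rewrite gE hE mulmxDl !mulmxDr !mul1mx mulmx1 -scalemxAl -scalemxAr scalerA.
rewrite !mxE (negbTE neq_ij) !add0r.
by field.
Qed.

Lemma transvection_Gamma_cong m (i j : 'I_2) z :
  (0 < m)%N -> i != j -> z \in gaussInt ->
  Gamma_cong m (transvection i j (m%:R * z)).
Proof.
move=> m_gt0 neq_ij zZ; have mC0 : m%:R != 0 :> algC by rewrite pnatr_eq0 -lt0n.
rewrite /Gamma_cong /SL2Zi det_transvection // eqxx andbT.
apply/andP; split; apply/forallP=> k; apply/forallP=> l; rewrite !mxE.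
  by apply: rpredD; rewrite ?rpredM ?rpred_nat.
rewrite addrC addrK mulrAC [_ / _]mulrC mulKf //.
by apply: rpredM; rewrite ?rpred_nat.
Qed.

Section OffdiagonalHomomorphism.

Variables (R : nzRingType) (m : nat) (F : {additive algC -> algC}).
Hypothesis m_gt0 : (0 < m)%N.
Hypothesis m_eq0 : m%:R = 0 :> R.
Hypothesis F_gaussInt : {in gaussInt, forall w, F w \is a Num.int}.

Definition offdiag_hom (i j : 'I_2) (g : 'M[algC]_2) : R :=
  int_red R (F (g i j / m%:R)).

Variables (i j : 'I_2).
Hypothesis neq_ij : i != j.

Lemma offdiag_homM :
  {in Gamma_cong m &, {morph offdiag_hom i j : g h / g *m h >-> g + h}}.
Proof.
move=> g h Gg Gh; rewrite /offdiag_hom.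
have [z zZ ->] := Gamma_cong_offdiagM m_gt0 neq_ij Gg Gh.
have gZ := F_gaussInt (Gamma_cong_offdiag neq_ij Gg).
have hZ := F_gaussInt (Gamma_cong_offdiag neq_ij Gh).
have mzZ : m%:R * F z \is a Num.int by rewrite rpredM ?rpred_nat ?F_gaussInt.
rewrite !raddfD /= mulr_natl raddfMn -(mulr_natl (F z)) !int_redD ?rpredD //.
rewrite int_redM ?rpred_nat ?F_gaussInt //.
by rewrite int_red_nat m_eq0 mul0r addr0 addrC.
Qed.

Lemma offdiag_hom_transvection z :
  offdiag_hom i j (transvection i j (m%:R * z)) = int_red R (F z).
Proof.
have mC0 : m%:R != 0 :> algC by rewrite pnatr_eq0 -lt0n.
by rewrite /offdiag_hom transvection_offdiag // mulrC mulKf.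
Qed.

Lemma offdiag_hom_transvection_other z :
  offdiag_hom i j (transvection j i z) = 0.
Proof.
by rewrite /offdiag_hom transvection_offdiag_other // mul0r raddf0 int_red0.
Qed.

End OffdiagonalHomomorphism.

Theorem theorem6p1 (p r : nat) : prime p -> (1 <= r)%N ->
  H2_dim_ge2 (Gamma_cong (p ^ r)) 'F_p.
Proof.
move=> p_pr r_gt0; set m := (p ^ r)%N.
have m_gt0 : (0 < m)%N by rewrite expn_gt0 prime_gt0.
have m_eq0 : m%:R = 0 :> 'F_p by rewrite natrX pchar_Fp_0 // expr0n gtn_eqF.
have ReZ : {in gaussInt, forall w, 'Re w \is a Num.int} by move=> w /andP[].
have ImZ : {in gaussInt, forall w, 'Im w \is a Num.int} by move=> w /andP[].
pose a := offdiag_hom 'F_p m (@Re algC); pose b := offdiag_hom 'F_p m (@Im algC).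
have aM i j : i != j -> {in Gamma_cong m &, {morph a i j : g h / g *m h >-> g + h}}
  := @offdiag_homM _ _ _ m_gt0 m_eq0 ReZ i j.
have bM i j : i != j -> {in Gamma_cong m &, {morph b i j : g h / g *m h >-> g + h}}
  := @offdiag_homM _ _ _ m_gt0 m_eq0 ImZ i j.
exists (cup (a 0 1) (b 0 1)), (cup (a 1 0) (b 1 0)).
split; [exact: cup_is_2cocycle (aM _ _ _) (bM _ _ _) ..|].
move=> x y cob.
have cob_sym i j (neq_ij : i != j) := coboundary_commute cob
  (transvection_Gamma_cong m_gt0 neq_ij (rpred1 _))
  (transvection_Gamma_cong m_gt0 neq_ij gaussInt_i) (transvectionC neq_ij _ _).
have := cob_sym 0 1 isT; have := cob_sym 1 0 isT.
rewrite /cup /a /b !offdiag_hom_transvection // !offdiag_hom_transvection_other //.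
(* expose 'Re and 'Im behind the coercion from additive maps *)
simpl Algebra.Additive.sort.
rewrite Re1 Im1 Re_i Im_i int_red0 int_red1 !(mul0r, mulr0, mulr1, add0r, addr0).
by move=> -> ->.
Qed.
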